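(* Let $n\geq 3$ be odd. Then \[ \mu^-(A_{n+1}) \leq \mu^-(A_n) \quad\text{and}\quad \mu^+(A_{n+1}) \leq \mu^+(A_n). \]
   Context: All graphs are simple; eigenvalues of a graph are those of its $(0,1)$-adjacency matrix. For a graph $G$, $\mu^-(G)$ denotes the largest eigenvalue of $G$ that is less than $-1$, and $\mu^+(G)$ denotes the smallest positive eigenvalue of $G$. Threshold graphs from binary strings: given $b=b_1b_2\cdots b_n\in\{0,1\}^n$ with $b_1=0$, let $G_1$ be a single vertex $v_1$, and for $j=2,\ldots,n$ obtain $G_j$ from $G_{j-1}$ by adding a new vertex $v_j$ which is adjacent to all previous vertices if $b_j=1$ and isolated if $b_j=0$; $G(b)=G_n$. The anti-regular graph $A_n$ is the threshold graph $G(b)$ with $b=0101\cdots01$ (length $n$) when $n$ is even and $b=00101\cdots01$ (length $n$) when $n$ is odd. *)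

From HB Require Import structures.
From mathcomp Require Import all_boot all_order all_algebra.
Set Implicit Arguments. Unset Strict Implicit. Unset Printing Implicit Defensive.
Import Order.TTheory GRing.Theory Num.Theory.
Local Open Scope ring_scope.

(* Threshold graph G(b) for a binary string b = b_1 ... b_n (stored 0-indexed:
   b_{k+1} = nth false b k). Vertex v_{k+1} is the ordinal k : 'I_n.
   For i < j, v_i ~ v_j iff b_j = 1 (v_j was added as a dominating vertex). *)
Definition threshold_adj (R : nzRingType) (b : seq bool) : 'M[R]_(size b) :=
  \matrix_(i, j) ((i != j) && nth false b (maxn i j))%:R.

(* bit string of the anti-regular graph A_n:
   n even : 0101...01 ;  n odd : 00101...01  (0-indexed position k) *)
Definition antiregular_bits (n : nat) : seq bool :=
  mkseq (fun k => if odd n then (k != 0%N) && ~~ odd k else odd k) n.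

Definition antiregular_adj (R : nzRingType) (n : nat) :=
  threshold_adj R (antiregular_bits n).

Definition is_mu_minus (R : realFieldType) (m : nat) (A : 'M[R]_m) (x : R) : Prop :=
  [/\ eigenvalue A x, x < -1 &
      forall y, eigenvalue A y -> y < -1 -> y <= x].

Definition is_mu_plus (R : realFieldType) (m : nat) (A : 'M[R]_m) (x : R) : Prop :=
  [/\ eigenvalue A x, 0 < x &
      forall y, eigenvalue A y -> 0 < y -> x <= y].

From HB Require Import structures.
From mathcomp Require Import all_boot all_order all_algebra.
From mathcomp Require Import polyrcf.
From mathcomp Require Import ring lra zify.
Import Order.TTheory GRing.Theory Num.Theory.
Local Open Scope ring_scope.
Set Implicit Arguments. Unset Strict Implicit. Unset Printing Implicit Defensive.

(* Conjugating a - A(b) by L = 1 - (upper shift) makes the characteristic matrix of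
   every threshold graph tridiagonal, so the characteristic polynomials of the
   anti-regular graphs satisfy a three-term recurrence; writing them as
   chi(A_2m) = G_m and chi(A_2m+1) = X F_m, one also has G_(m+1) = (X + 1) H_m.
   For n = 2k + 3 the claim thus compares the first positive roots of G_(k+2) and
   F_(k+1), and the last roots below -1 of H_(k+1) and F_(k+1).  The values at 0
   and -1 are explicit signs (-1)^k, and an induction on k that tracks the sign of
   F_k (resp. H_(k+1)) up to the relevant root of F_(k+1) shows, by the
   intermediate value theorem, that G_(k+2) changes sign on (0, w] and that H_(k+1)
   keeps a constant sign between the last root of F_(k+1) below -1 and -1. *)

Section Tridiagonal.
Variable R : comNzRingType.

Definition tridiag n (d e : nat -> R) : 'M[R]_n :=
  \matrix_(i, j) (if i == j :> nat then d i else if j == i.+1 :> nat then e i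
                  else if i == j.+1 :> nat then e j else 0).

Lemma eq_tridiag n d d' e e' :
    (forall i, (i < n)%N -> d i = d' i) -> (forall i, (i.+1 < n)%N -> e i = e' i) ->
  tridiag n d e = tridiag n d' e'.
Proof.
move=> dd' ee'; apply/matrixP => i j; rewrite !mxE.
case: eqP => [_|_]; first exact: dd'.
case: eqP => [ji|_]; first by rewrite ee' // -ji.
by case: eqP => [ij|_] //; rewrite ee' // -ij.
Qed.

Lemma det_tridiagSS n d e :
  \det (tridiag n.+2 d e) =
    d 0%N * \det (tridiag n.+1 (d \o S) (e \o S))
    - e 0%N ^+ 2 * \det (tridiag n (d \o S \o S) (e \o S \o S)).
Proof.
rewrite (expand_det_row _ ord0) !big_ord_recl big1 => [|i _]; last first.
  by rewrite !mxE mul0r.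
rewrite addr0 !mxE /= /cofactor /= expr0 expr1 !mul1r.
have -> : row' ord0 (col' ord0 (tridiag n.+2 d e)) = tridiag n.+1 (d \o S) (e \o S).
  by apply/matrixP => i j; rewrite !mxE.
set B := row' ord0 (col' (lift ord0 ord0) (tridiag n.+2 d e)).
rewrite (expand_det_col B ord0) big_ord_recl big1 => [|i _]; last first.
  by rewrite !mxE mul0r.
rewrite addr0 !mxE /= /cofactor /= expr0 mul1r.
have -> : row' ord0 (col' ord0 B) = tridiag n (d \o S \o S) (e \o S \o S).
  by apply/matrixP => i j; rewrite !mxE.
ring.
Qed.

End Tridiagonal.

Section ThresholdCongruence.
Variable R : comNzRingType.

Definition fdiff n (u : nat -> R) i := u i - (if (i.+1 < n)%N then u i.+1 else 0).

Definition fdiff_mx n : 'M[R]_n :=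
  \matrix_(i, j) ((i == j :> nat)%:R - (j == i.+1 :> nat)%:R).

Lemma det_fdiff_mx n : \det (fdiff_mx n) = 1.
Proof.
have trig : is_trig_mx (fdiff_mx n)^T.
  apply/is_trig_mxP => i j ij.
  by rewrite !mxE (gtn_eqF ij) (ltn_eqF (ltnW ij : (i < j.+1)%N)) subrr.
rewrite -det_tr det_trig // big1 // => i _.
by rewrite !mxE eqxx (ltn_eqF (ltnSn i)) subr0.
Qed.

Lemma sum_delta n (u : nat -> R) t :
  \sum_(k < n) (k == t :> nat)%:R * u k = if (t < n)%N then u t else 0.
Proof.
transitivity (\sum_(k < n | k == t :> nat) u k); last exact: big_ord1_eq.
rewrite [RHS]big_mkcond /=; apply: eq_bigr => k _.
by case: eqP; rewrite ?mul1r ?mul0r.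
Qed.

Lemma sum_fdiff_mx n (u : nat -> R) (i : 'I_n) :
  \sum_(k < n) fdiff_mx n i k * u k = fdiff n u i.
Proof.
under eq_bigr => k _ do rewrite !mxE mulrBl eq_sym.
by rewrite sumrB !sum_delta ltn_ord.
Qed.

Lemma fdiff_congrE n (m : nat -> nat -> R) (i j : 'I_n) :
  (fdiff_mx n *m \matrix_(k, l) m k l *m (fdiff_mx n)^T) i j =
  fdiff n (fun l => fdiff n (m^~ l) i) j.
Proof.
rewrite mxE -sum_fdiff_mx; apply: eq_bigr => l _.
rewrite mulrC; congr (_ * _); first by rewrite mxE.
by rewrite mxE -sum_fdiff_mx; apply: eq_bigr => k _; rewrite !mxE.
Qed.

Definition threshold_entry (b : seq bool) (a : R) i j : R :=
  (if i == j then a else 0) - ((i != j) && nth false b (maxn i j))%:R.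

Definition threshold_diag (b : seq bool) (a : R) i : R :=
  if i.+1 == size b then a else 2%:R * (a + (nth false b i.+1)%:R).

Definition threshold_offdiag (b : seq bool) (a : R) i : R :=
  - (a + (nth false b i.+1)%:R).

Lemma threshold_charE b a :
  a%:M - threshold_adj R b = \matrix_(i, j) threshold_entry b a i j.
Proof.
apply/matrixP => i j; rewrite !mxE /threshold_entry.
case: (eqVneq i j) => [->|ij]; rewrite ?eqxx ?subr0 //.
by rewrite (negPf (ij : (i != j :> nat))) mulr0n.
Qed.

Ltac decide_nat :=
  repeat match goal with
  | |- context [?x == ?y] =>
      first [ have -> : (x == y) = true by lia | have -> : (x == y) = false by lia ]
  | |- context [maxn ?x ?y] =>
      first [ have -> : maxn x y = x by lia | have -> : maxn x y = y by lia ]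
  | |- context [(?x <= ?y)%N] =>
      first [ have -> : (x <= y)%N = true by lia | have -> : (x <= y)%N = false by lia
            | case: (leqP x y) => ? ]
  end.

Lemma threshold_fdiff2 b a i j : (i < size b)%N -> (j < size b)%N ->
  fdiff (size b) (fun l => fdiff (size b) (threshold_entry b a ^~ l) i) j =
  if i == j then threshold_diag b a i
  else if j == i.+1 then threshold_offdiag b a i
  else if i == j.+1 then threshold_offdiag b a j else 0.
Proof.
rewrite /fdiff /threshold_entry /threshold_diag /threshold_offdiag.
move: (size b) => n ilt jlt.
case: (ltngtP i j) => ij; [case: (eqVneq j i.+1) => [->|?] |
  case: (eqVneq i j.+1) => [->|?] | rewrite ij].
all: decide_nat; rewrite /=; ring.
Qed.

Lemma fdiff_congr_threshold b a :
  fdiff_mx (size b) *m (a%:M - threshold_adj R b) *m (fdiff_mx (size b))^T =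
  tridiag (size b) (threshold_diag b a) (threshold_offdiag b a).
Proof.
apply/matrixP => i j.
by rewrite threshold_charE fdiff_congrE threshold_fdiff2 // mxE.
Qed.

Lemma det_threshold_char b a :
  \det (a%:M - threshold_adj R b) =
  \det (tridiag (size b) (threshold_diag b a) (threshold_offdiag b a)).
Proof.
by rewrite -fdiff_congr_threshold !det_mulmx det_tr det_fdiff_mx mul1r mulr1.
Qed.

End ThresholdCongruence.

Section AntiregularCharacteristic.
Variable R : comNzRingType.
Local Notation bits := antiregular_bits.

Lemma size_antiregular_bits N : size (bits N) = N.
Proof. exact: size_mkseq. Qed.

Lemma antiregular_bits_shift N k : (0 < k)%N ->
  nth false (bits N.+1) k.+1 = nth false (bits N) k.
Proof.
move=> k0; have [kN|Nk] := ltnP k N; last by rewrite !nth_default ?size_mkseq.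
by rewrite /bits !nth_mkseq //=; case: (odd N); rewrite /= ?negbK // -lt0n k0.
Qed.

Lemma antiregular_bits1 N : nth false (bits N.+2) 1 = ~~ odd N.
Proof. by rewrite /bits nth_mkseq //=; case: (odd N). Qed.

Lemma det_antiregular_char_rec N (a : R) :
  \det (a%:M - antiregular_adj R N.+2) =
    2%:R * (a + (~~ odd N)%:R) * \det (a%:M - antiregular_adj R N.+1)
    - (a + (~~ odd N)%:R) ^+ 2 * \det (a%:M - antiregular_adj R N).
Proof.
rewrite /antiregular_adj !det_threshold_char !size_antiregular_bits det_tridiagSS.
rewrite /threshold_diag /threshold_offdiag !size_antiregular_bits antiregular_bits1 sqrrN.
congr (_ * _ - _ * _); apply: congr1; apply: eq_tridiag => i _;
  rewrite /comp ?eqSS [in LHS](antiregular_bits_shift N.+1) //.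
all: by rewrite [in LHS](antiregular_bits_shift N).
Qed.

End AntiregularCharacteristic.

Section AntiregularPolynomials.
Variable R : comNzRingType.

Fixpoint antiregular_FG m : {poly R} * {poly R} :=
  if m is m'.+1 then
    let: (F, G) := antiregular_FG m' in
    let G' := 2%:R * 'X * ('X + 1) * F - ('X + 1) ^+ 2 * G in
    (2%:R * G' - 'X ^+ 2 * F, G')
  else (1, 1).

Definition antiregular_F m := (antiregular_FG m).1.
Definition antiregular_G m := (antiregular_FG m).2.
Definition antiregular_H m := 2%:R * 'X * antiregular_F m - ('X + 1) * antiregular_G m.

Local Notation F := antiregular_F.
Local Notation G := antiregular_G.
Local Notation H := antiregular_H.

Lemma antiregular_F0 : F 0 = 1. Proof. by []. Qed.
Lemma antiregular_G0 : G 0 = 1. Proof. by []. Qed.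

Lemma antiregular_GS m :
  G m.+1 = 2%:R * 'X * ('X + 1) * F m - ('X + 1) ^+ 2 * G m.
Proof. by rewrite /G /F /=; case: antiregular_FG. Qed.

Lemma antiregular_FS m : F m.+1 = 2%:R * G m.+1 - 'X ^+ 2 * F m.
Proof. by rewrite /G /F /=; case: antiregular_FG. Qed.

Lemma antiregular_GS_H m : G m.+1 = ('X + 1) * H m.
Proof. rewrite antiregular_GS /H; ring. Qed.

Lemma char_poly_threshold (b : seq bool) :
  char_poly (threshold_adj R b) = \det ('X%:M - threshold_adj {poly R} b).
Proof.
by rewrite /char_poly /char_poly_mx; apply: congr1; apply/matrixP => i j; rewrite !mxE polyC_natr.
Qed.

Lemma char_poly_antiregular m :
  char_poly (antiregular_adj R m.*2) = G m /\
  char_poly (antiregular_adj R m.*2.+1) = 'X * F m.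
Proof.
rewrite /antiregular_adj !char_poly_threshold -!/(antiregular_adj _ _).
elim: m => [|m [IHeven IHodd]].
  by rewrite det_mx00 det_mx11 !mxE /= antiregular_F0 subr0 mulr1.
have Geven : \det ('X%:M - antiregular_adj {poly R} m.+1.*2) = G m.+1.
  rewrite doubleS det_antiregular_char_rec IHeven IHodd odd_double antiregular_GS /=.
  ring.
split=> //.
rewrite doubleS det_antiregular_char_rec -doubleS Geven IHodd /= odd_double /=.
rewrite antiregular_FS; ring.
Qed.

End AntiregularPolynomials.

Section AntiregularValues.
Variables (R : comNzRingType) (x : R).
Local Notation f m := (antiregular_F R m).[x].
Local Notation g m := (antiregular_G R m).[x].
Local Notation h m := (antiregular_H R m).[x].

Lemma horner_antiregular_GS m : g m.+1 = 2%:R * x * (x + 1) * f m - (x + 1) ^+ 2 * g m.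
Proof. by rewrite antiregular_GS !hornerE; ring. Qed.

Lemma horner_antiregular_FS m : f m.+1 = 2%:R * g m.+1 - x ^+ 2 * f m.
Proof. by rewrite antiregular_FS !hornerE; ring. Qed.

Lemma horner_antiregular_H m : h m = 2%:R * x * f m - (x + 1) * g m.
Proof. by rewrite /antiregular_H !hornerE; ring. Qed.

Lemma horner_antiregular_HS m : h m.+1 = 2%:R * x * f m.+1 - (x + 1) ^+ 2 * h m.
Proof.
rewrite !horner_antiregular_H horner_antiregular_FS horner_antiregular_GS; ring.
Qed.

Lemma horner_antiregular_FS_H m : f m.+1 = 2%:R * (x + 1) * h m - x ^+ 2 * f m.
Proof.
rewrite horner_antiregular_FS horner_antiregular_GS horner_antiregular_H; ring.
Qed.

Lemma horner_antiregular_FSS m :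
  f m.+2 = (2%:R * x * (x + 1) - 1) * f m.+1 - (x * (x + 1)) ^+ 2 * f m.
Proof.
rewrite horner_antiregular_FS horner_antiregular_GS (horner_antiregular_FS m).
rewrite horner_antiregular_GS; ring.
Qed.

Lemma horner_antiregular_GSS m :
  2%:R * g m.+2 = (4%:R * x * (x + 1) - (x + 1) ^+ 2) * f m.+1 - (x * (x + 1)) ^+ 2 * f m.
Proof. rewrite horner_antiregular_GS (horner_antiregular_FS m); ring. Qed.

Lemma horner_antiregular_F1 : f 1 = x ^+ 2 - 2%:R.
Proof.
rewrite horner_antiregular_FS horner_antiregular_GS antiregular_F0 antiregular_G0 !hornerC.
ring.
Qed.

Lemma horner_antiregular_H0 : h 0 = x - 1.
Proof. rewrite horner_antiregular_H antiregular_F0 antiregular_G0 !hornerC; ring. Qed.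

End AntiregularValues.

Section AntiregularEigenvalues.
Variable R : fieldType.

Lemma eigenvalue_antiregular_even m a :
  eigenvalue (antiregular_adj R m.*2) a = root (antiregular_G R m) a.
Proof. by rewrite eigenvalue_root_char (char_poly_antiregular R m).1. Qed.

Lemma eigenvalue_antiregular_odd m a :
  eigenvalue (antiregular_adj R m.*2.+1) a = (a == 0) || root (antiregular_F R m) a.
Proof. by rewrite eigenvalue_root_char (char_poly_antiregular R m).2 rootM rootX. Qed.

End AntiregularEigenvalues.

Lemma signrS (R : pzRingType) k : (-1) ^+ k.+1 = - (-1) ^+ k :> R.
Proof. by rewrite exprS mulN1r. Qed.

Lemma mul_le0_sign (R : realDomainType) (s x y : R) :
  0 < s * x -> s * y <= 0 -> x * y <= 0.
Proof.
move=> sx sy; have s0 : s != 0 by apply: contraTneq sx => ->; rewrite mul0r ltxx.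
have s2 : 0 < s ^+ 2 by rewrite exprn_even_gt0 //= s0 orbT.
by rewrite -(pmulr_rle0 _ s2) expr2 mulrACA mulr_ge0_le0 // ltW.
Qed.

Section ExtremalRoots.
Variable R : rcfType.
Implicit Types (p : {poly R}) (a b s t u v x y : R).

Definition first_root_after p a x :=
  [/\ a < x, root p x & {in `]a, x[, forall y, ~~ root p y}].

Definition last_root_before p b x :=
  [/\ x < b, root p x & {in `]x, b[, forall y, ~~ root p y}].

Lemma ivt_first_root_after p a b : a <= b -> p.[a] * p.[b] <= 0 -> ~~ root p a ->
  exists2 x, x <= b & first_root_after p a x.
Proof.
move=> ab pab pa; have [z /[!in_itv]/= /andP[az zb] pz] := polyrcf.poly_ivt ab pab.
have {}az : a < z by rewrite lt_def az andbT; apply: contraNneq pa => <-.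
case: (next_rootP p a z) => [p0|y _ /rootP py /[!in_itv]/= /andP[ay yz] noroot|c _ _ noroot].
- by rewrite p0 root0 in pa.
- by exists y; [rewrite (le_trans (ltW yz)) | split].
- by exists z.
Qed.

Lemma ivt_last_root_before p a b : a <= b -> p.[a] * p.[b] <= 0 -> ~~ root p b ->
  exists2 x, a <= x & last_root_before p b x.
Proof.
move=> ab pab pb; have [z /[!in_itv]/= /andP[az zb] pz] := polyrcf.poly_ivt ab pab.
have {}zb : z < b by rewrite lt_def zb andbT; apply: contraNneq pb => ->.
case: (prev_rootP p z b) => [p0|y _ /rootP py /[!in_itv]/= /andP[zy yb] noroot|c _ _ noroot].
- by rewrite p0 root0 in pb.
- by exists y; [rewrite (le_trans az (ltW zy)) | split].
- by exists z.
Qed.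

Lemma noroot_mul_ge0 p u v : {in `]u, v[, forall y, ~~ root p y} ->
  {in `[u, v] &, forall x y, 0 <= p.[x] * p.[y]}.
Proof.
move=> noroot x y; wlog xy : x y / x <= y => [wlog_xy|].
  by case: (leP x y) => [|/ltW] le xuv yuv; [|rewrite mulrC]; apply: wlog_xy.
rewrite !in_itv /= => /andP[ux _] /andP[_ yv]; rewrite leNgt; apply/negP.
case/(polyrcf.poly_ivtoo xy) => z /[!in_itv]/= /andP[xz zy] pz.
suff /noroot : z \in `]u, v[ by rewrite pz.
by rewrite in_itv /= (le_lt_trans ux xz) (lt_le_trans zy yv).
Qed.

Lemma noroot_sign_ge0 p u v s t : {in `]u, v[, forall y, ~~ root p y} ->
  t \in `[u, v] -> 0 < s * p.[t] -> {in `[u, v], forall x, 0 <= s * p.[x]}.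
Proof.
move=> noroot tuv spt x xuv; rewrite -(pmulr_lge0 _ spt) mulrACA -expr2.
by rewrite mulr_ge0 ?sqr_ge0 ?(noroot_mul_ge0 noroot).
Qed.

Lemma noroot_sign_gt0 p u v s t : {in `]u, v[, forall y, ~~ root p y} ->
  t \in `[u, v] -> 0 < s * p.[t] -> {in `]u, v[, forall x, 0 < s * p.[x]}.
Proof.
move=> noroot tuv spt x xuv; rewrite lt_def (noroot_sign_ge0 noroot tuv spt) ?andbT.
  rewrite mulf_neq0 -?rootE ?noroot //.
  by apply: contraTneq spt => ->; rewrite mul0r ltxx.
by apply: subitvP xuv; rewrite subitvE !bnd_simp.
Qed.

Lemma is_mu_minusP m (A : 'M[R]_m) p x :
    (forall a, a < -1 -> eigenvalue A a = root p a) -> last_root_before p (-1) x ->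
  is_mu_minus A x.
Proof.
move=> eigA [x_lt px noroot_x]; split => //; first by rewrite eigA.
move=> a eig_a a_lt; rewrite leNgt; apply/negP => xa.
suff /noroot_x : a \in `]x, -1[ by rewrite -eigA // eig_a.
by rewrite in_itv /= xa.
Qed.

Lemma is_mu_plusP m (A : 'M[R]_m) p x :
    (forall a, 0 < a -> eigenvalue A a = root p a) -> first_root_after p 0 x ->
  is_mu_plus A x.
Proof.
move=> eigA [x_gt px noroot_x]; split => //; first by rewrite eigA.
move=> a eig_a a_gt; rewrite leNgt; apply/negP => ax.
suff /noroot_x : a \in `]0, x[ by rewrite -eigA // eig_a.
by rewrite in_itv /= a_gt ax.
Qed.

End ExtremalRoots.

Section Interlacing.
Variable R : rcfType.
Local Notation F := (antiregular_F R).
Local Notation G := (antiregular_G R).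
Local Notation H := (antiregular_H R).
Local Notation sgn k := ((-1) ^+ k : R).

Lemma antiregular_G_at0 k : (G k).[0] = sgn k.
Proof.
elim: k => [|k IH]; first by rewrite antiregular_G0 hornerC.
by rewrite horner_antiregular_GS IH signrS; ring.
Qed.

Lemma antiregular_F_at0 k : (F k.+1).[0] = 2%:R * sgn k.+1.
Proof. by rewrite horner_antiregular_FS antiregular_G_at0; ring. Qed.

Lemma antiregular_F_atN1 k : (F k).[-1] = sgn k.
Proof.
elim: k => [|k IH]; first by rewrite antiregular_F0 hornerC.
by rewrite horner_antiregular_FS horner_antiregular_GS IH signrS; ring.
Qed.

Lemma antiregular_H_atN1 k : (H k).[-1] = 2%:R * sgn k.+1.
Proof. by rewrite horner_antiregular_H antiregular_F_atN1 signrS; ring. Qed.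

Lemma antiregular_F_first_pos_root k :
  exists2 w, first_root_after (F k.+1) 0 w &
             {in `]0, w], forall x, 0 <= sgn k * (F k).[x]}.
Proof.
elim: k => [|k [w [w0 Fw noroot_w] sgnF]].
  have [w _ w_first] : exists2 w, w <= 2%:R & first_root_after (F 1) 0 w.
    apply: ivt_first_root_after; rewrite ?rootE ?horner_antiregular_F1 ?expr0n /=.
    - lra.
    - nra.
    - by apply: ltr0_neq0; lra.
  by exists w => // x _; rewrite antiregular_F0 hornerC mulr1 ler01.
have sgnFSS_w : sgn k * (F k.+2).[w] <= 0.
  have := sgnF w; rewrite in_itv /= w0 lexx => /(_ isT).
  rewrite horner_antiregular_FSS (rootP Fw) mulr0 sub0r mulrN mulrCA oppr_le0.
  by move=> sgnFw; rewrite mulr_ge0 ?sqr_ge0.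
have sgnFSS_0 : 0 < sgn k * (F k.+2).[0].
  by rewrite antiregular_F_at0 !signrS opprK mulrCA -expr2 sqrr_sign mulr1 ltr0n.
have FSS_0 : ~~ root (F k.+2) 0.
  by rewrite rootE antiregular_F_at0 mulf_neq0 ?pnatr_eq0 ?signr_eq0.
have [w' w'w w'_first] :=
  ivt_first_root_after (ltW w0) (mul_le0_sign sgnFSS_0 sgnFSS_w) FSS_0.
exists w' => // x; rewrite in_itv /= => /andP[x0 xw'].
apply: (noroot_sign_ge0 (t := 0) noroot_w); rewrite ?in_itv /= ?lexx ?(ltW w0) //.
  by rewrite antiregular_F_at0 mulrCA -expr2 sqrr_sign mulr1 ltr0n.
by rewrite (ltW x0) (le_trans xw').
Qed.

Lemma first_pos_root_G_le_F k : exists t w,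
  [/\ first_root_after (G k.+2) 0 t, first_root_after (F k.+1) 0 w & t <= w].
Proof.
have [w [w0 Fw noroot_w] sgnF] := antiregular_F_first_pos_root k.
have sgnGSS_w : sgn k * (G k.+2).[w] <= 0.
  have := sgnF w; rewrite in_itv /= w0 lexx => /(_ isT) sgnFw.
  rewrite -(pmulr_rle0 _ (ltr0Sn R 1)) mulrCA horner_antiregular_GSS (rootP Fw).
  by rewrite mulr0 sub0r mulrN mulrCA oppr_le0 mulr_ge0 ?sqr_ge0.
have sgnGSS_0 : 0 < sgn k * (G k.+2).[0].
  by rewrite antiregular_G_at0 !signrS opprK -expr2 sqrr_sign ltr01.
have GSS_0 : ~~ root (G k.+2) 0 by rewrite rootE antiregular_G_at0 signr_eq0.
have [t tw t_first] :=
  ivt_first_root_after (ltW w0) (mul_le0_sign sgnGSS_0 sgnGSS_w) GSS_0.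
by exists t, w.
Qed.

(* The witness z yields, by the IVT, a root of H_(k+1) below -1. *)
Definition neg_interlacing k y :=
  [/\ last_root_before (F k.+1) (-1) y,
      {in `[y, -1], forall x, 0 <= sgn k * (F k).[x]},
      {in `]y, -1[, forall x, 0 < sgn k * (H k.+1).[x]} &
      exists2 z, z < -1 & sgn k * (H k.+1).[z] <= 0].

Lemma neg_interlacing0 : exists y, neg_interlacing 0 y.
Proof.
have [y _ [y_lt Fy noroot_y]] : exists2 y, - 2%:R <= y & last_root_before (F 1) (-1) y.
  apply: ivt_last_root_before; rewrite ?rootE ?horner_antiregular_F1.
  - lra.
  - nra.
  - by apply: ltr0_neq0; lra.
exists y; split => //.
- by move=> x _; rewrite antiregular_F0 hornerC mulr1 ler01.
- move=> x xy; have := noroot_sign_gt0 (s := sgn 1) (t := -1) noroot_y.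
  rewrite in_itv /= lexx (ltW y_lt) antiregular_F_atN1 -expr2 sqrr_sign => /(_ isT ltr01 x xy).
  move: xy; rewrite in_itv /= => /andP[_ x_lt].
  rewrite horner_antiregular_HS horner_antiregular_H0 horner_antiregular_F1.
  have := sqr_ge0 (x + 1); nra.
- exists (- 2%:R); first lra.
  rewrite horner_antiregular_HS horner_antiregular_H0 horner_antiregular_F1; lra.
Qed.

Lemma neg_interlacingS k y : neg_interlacing k y -> exists y', neg_interlacing k.+1 y'.
Proof.
case=> [[y_lt Fy noroot_y] sgnF sgnH _].
have y_in : y \in `[y, -1] by rewrite in_itv /= lexx ltW.
have N1_in (u : R) : u < -1 -> -1 \in `[u, -1] by move=> u_lt; rewrite in_itv /= lexx ltW.
have sgnFSS_N1 : 0 < sgn k * (F k.+2).[-1].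
  by rewrite antiregular_F_atN1 !signrS opprK -expr2 sqrr_sign ltr01.
have sgnFSS_y : sgn k * (F k.+2).[y] <= 0.
  have := sgnF y y_in; rewrite horner_antiregular_FSS (rootP Fy).
  by rewrite mulr0 sub0r mulrN mulrCA oppr_le0 => ?; rewrite mulr_ge0 ?sqr_ge0.
have FSS_N1 : ~~ root (F k.+2) (-1) by rewrite rootE antiregular_F_atN1 signr_eq0.
have FSS_sign : (F k.+2).[y] * (F k.+2).[-1] <= 0.
  by rewrite mulrC (mul_le0_sign sgnFSS_N1 sgnFSS_y).
have [y' yy' [y'_lt Fy' noroot_y']] := ivt_last_root_before (ltW y_lt) FSS_sign FSS_N1.
have sgnHy : 0 <= sgn k * (H k.+1).[y].
  have noroot_H : {in `]y, -1[, forall x, ~~ root (H k.+1) x}.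
    by move=> x /sgnH; rewrite rootE; apply: contraTN => /eqP ->; rewrite mulr0 ltxx.
  apply: (noroot_sign_ge0 noroot_H (N1_in _ y_lt)); last exact: y_in.
  by rewrite antiregular_H_atN1 !signrS opprK mulrCA -expr2 sqrr_sign mulr1 ltr0n.
exists y'; split => //.
- move=> x; rewrite !in_itv /= => /andP[y'x x_le].
  apply: (noroot_sign_ge0 (t := -1) noroot_y (N1_in _ y_lt)).
    by rewrite antiregular_F_atN1 signrS mulrN mulNr -expr2 sqrr_sign opprK ltr01.
  by rewrite in_itv /= (le_trans yy' y'x) x_le.
- move=> x /[dup] xy' /[!in_itv]/= /andP[y'x x_lt].
  have sgnFx := noroot_sign_gt0 (t := -1) noroot_y' (N1_in _ y'_lt) sgnFSS_N1 xy'.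
  have sgnHx : 0 < sgn k * (H k.+1).[x].
    by apply: sgnH; rewrite in_itv /= x_lt (le_lt_trans yy' y'x).
  rewrite horner_antiregular_HS signrS.
  have := sqr_ge0 (x + 1); nra.
- exists y => //.
  (* At the root y of F_(k+1): H_(k+2)(y) = (y + 1)(3y - 1) H_(k+1)(y). *)
  rewrite horner_antiregular_HS (horner_antiregular_FS_H _ k.+1) (rootP Fy) signrS.
  have : 0 < (y + 1) * (3%:R * y - 1) by nra.
  nra.
Qed.

Lemma neg_interlacing_exists k : exists y, neg_interlacing k y.
Proof.
elim: k => [|k [y /neg_interlacingS //]]; exact: neg_interlacing0.
Qed.

Lemma last_neg_root_H_le_F k : exists x y,
  [/\ last_root_before (H k.+1) (-1) x, last_root_before (F k.+1) (-1) y & x <= y].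
Proof.
have [y [y_last _ sgnH [z z_lt sgnHz]]] := neg_interlacing_exists k.
have sgnH_N1 : 0 < sgn k * (H k.+1).[-1].
  by rewrite antiregular_H_atN1 !signrS opprK mulrCA -expr2 sqrr_sign mulr1 ltr0n.
have H_N1 : ~~ root (H k.+1) (-1).
  by rewrite rootE antiregular_H_atN1 mulf_neq0 ?pnatr_eq0 ?signr_eq0.
have H_sign : (H k.+1).[z] * (H k.+1).[-1] <= 0.
  by rewrite mulrC (mul_le0_sign sgnH_N1 sgnHz).
have [x _ [x_lt Hx noroot_x]] := ivt_last_root_before (ltW z_lt) H_sign H_N1.
exists x, y; split => //; rewrite leNgt; apply/negP => yx.
have /sgnH : x \in `]y, -1[ by rewrite in_itv /= yx.
by rewrite (rootP Hx) mulr0 ltxx.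
Qed.

End Interlacing.

Theorem proposition2p1 (R : rcfType) (n : nat) :
  (3 <= n)%N -> odd n ->
  (exists x y : R,
      [/\ is_mu_minus (antiregular_adj R n.+1) x,
          is_mu_minus (antiregular_adj R n) y & x <= y]) /\
  (exists x y : R,
      [/\ is_mu_plus (antiregular_adj R n.+1) x,
          is_mu_plus (antiregular_adj R n) y & x <= y]).
Proof.
move=> n_ge3 n_odd.
have [k ->] : exists k, n = k.+1.*2.+1.
  exists (n./2).-1; have := odd_double_half n; rewrite n_odd; lia.
have eig_even a : eigenvalue (antiregular_adj R (k.+1.*2.+1).+1) a =
                  root ('X + 1) a || root (antiregular_H R k.+1) a.
  by rewrite -doubleS eigenvalue_antiregular_even antiregular_GS_H rootM.
have eig_odd := @eigenvalue_antiregular_odd R k.+1.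
split.
- have [x [y [x_last y_last xy]]] := @last_neg_root_H_le_F R k.
  exists x, y; split => //.
    apply: is_mu_minusP x_last => a a_lt.
    have a1_lt : a + 1 < 0 by lra.
    by rewrite eig_even rootE !hornerE lt_eqF.
  apply: is_mu_minusP y_last => a a_lt.
  by rewrite eig_odd lt_eqF // (lt_trans a_lt) // ltrN10.
- have [x [y [x_first y_first xy]]] := @first_pos_root_G_le_F R k.
  exists x, y; split => //.
    apply: is_mu_plusP x_first => a _.
    by rewrite -doubleS eigenvalue_antiregular_even.
  by apply: is_mu_plusP y_first => a a_gt; rewrite eig_odd gt_eqF.
Qed.
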